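(* Let $n=n_1+n_2+n_3=m_1+m_2+m_3$ be partitions of $n$ into positive integers, let $G=U(n)$, let $L=U(n_1)\times U(n_2)\times U(n_3)$ and $H=U(m_1)\times U(m_2)\times U(m_3)$ be the natural block-diagonal subgroups of $G$, and let $G'=O(n)$. Then $LG'H\subsetneq G$.
   Context: $LG'H=\{xyz:x\in L,y\in G',z\in H\}$. *)

From HB Require Import structures.
From mathcomp Require Import all_boot all_order all_algebra.
From mathcomp Require Import complex.
From mathcomp Require Import Rstruct.
Set Implicit Arguments. Unset Strict Implicit. Unset Printing Implicit Defensive.
Import Order.TTheory GRing.Theory Num.Theory.
Local Open Scope ring_scope.

Definition CC : numClosedFieldType := (Rdefinitions.R)[i].

Definition adjmx n (A : 'M[CC]_n) : 'M[CC]_n := (map_mx Num.conj A)^T.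

Definition unitaryC n (A : 'M[CC]_n) : bool := A *m adjmx A == 1%:M.

Definition orthoR n (A : 'M[CC]_n) : bool :=
  [forall i, forall j, A i j \is Num.real] && (A *m A^T == 1%:M).

Definition blk (k1 k2 i : nat) : nat :=
  if (i < k1)%N then 0%N else if (i < k1 + k2)%N then 1%N else 2%N.

(* The natural block-diagonal subgroup U(k1) x U(k2) x U(k3) of U(n),
   where n = k1 + k2 + k3 (k3 is determined by n). *)
Definition blockU n (k1 k2 : nat) (A : 'M[CC]_n) : bool :=
  unitaryC A &&
  [forall i : 'I_n, forall j : 'I_n,
     (blk k1 k2 i != blk k1 k2 j) ==> (A i j == 0)].

(* For g in U(n) let P_c and Q_c be the coordinate projections onto the c-th
   block of the partitions (n1, n2, n3) and (m1, m2, m3), and put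
   tau(g) = tr (P_0 g Q_0 g^* P_1 g Q_1 g^* ).  P_c commutes with L and Q_c
   with H, so tau(x g z) = tau(g) for x in L and z in H; and tau is real on
   real matrices, hence on O(n).  So tau is real on L O(n) H.  A unitary that
   acts as a 3 x 3 unitary W on one coordinate of each block (followed by a
   transposition matching the blocks of the second partition) has
   tau = W_00 W_10^* W_11 W_01^*, which is not real for a suitable W. *)

From HB Require Import structures.
From mathcomp Require Import all_boot all_order all_algebra perm.
From mathcomp Require Import complex Rstruct sesquilinear spectral.
From mathcomp Require Import ring lra zify.
Set Implicit Arguments. Unset Strict Implicit. Unset Printing Implicit Defensive.
Import Order.TTheory GRing.Theory Num.Theory.
Local Open Scope ring_scope.
Local Open Scope sesquilinear_scope.

Lemma adjmxE n (A : 'M[CC]_n) : adjmx A = A ^t*.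
Proof. by rewrite /adjmx map_trmx. Qed.

Lemma unitaryCE n (A : 'M[CC]_n) : unitaryC A = (A \is unitarymx).
Proof. by rewrite /unitaryC adjmxE. Qed.

Lemma adjmxD m n (A B : 'M[CC]_(m, n)) : (A + B) ^t* = A ^t* + B ^t*.
Proof. by apply/matrixP=> i j; rewrite !mxE rmorphD. Qed.

Lemma adjmx1 n : (1%:M : 'M[CC]_n) ^t* = 1%:M.
Proof. by apply/matrixP=> i j; rewrite !mxE eq_sym rmorph_nat. Qed.

Lemma real_adjmx m n (A : 'M[CC]_(m, n)) : A \is a mxOver Num.real -> A ^t* = A^T.
Proof. by move=> /mxOverP realA; apply/matrixP=> i j; rewrite !mxE conj_Creal. Qed.

Lemma real_adjmx_real m n (A : 'M[CC]_(m, n)) :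
  A \is a mxOver Num.real -> A ^t* \is a mxOver Num.real.
Proof.
by move=> realA; rewrite real_adjmx //; apply/mxOverP=> i j; rewrite mxE (mxOverP realA).
Qed.

Lemma orthoR_real n (y : 'M[CC]_n) : orthoR y -> y \is a mxOver Num.real.
Proof. by case/andP=> /forallP realy _; apply/mxOverP=> i j; move/forallP: (realy i). Qed.

Lemma orthoR_unitary n (y : 'M[CC]_n) : orthoR y -> y \is unitarymx.
Proof. by move=> oy; rewrite qualifE real_adjmx ?orthoR_real //; case/andP: oy. Qed.

Lemma blockU_unitary n k1 k2 (x : 'M[CC]_n) : blockU k1 k2 x -> x \is unitarymx.
Proof. by case/andP; rewrite unitaryCE. Qed.

Lemma mxtrace_unitary_conj n (x A : 'M[CC]_n) :
  x \is unitarymx -> \tr (x *m A *m x ^t*) = \tr A.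
Proof. by move=> ux; rewrite mxtrace_mulC mulmxA -[x ^t*]mul1mx mulmxKtV ?mul1mx. Qed.

Lemma unitary_conjM n (x A B : 'M[CC]_n) : x \is unitarymx ->
  x *m A *m x ^t* *m (x *m B *m x ^t*) = x *m (A *m B) *m x ^t*.
Proof. by move=> ux; rewrite !mulmxA mulmxKtV. Qed.

Lemma mulmx_1D n (A B : 'M[CC]_n) :
  (1%:M + A) *m (1%:M + B) = 1%:M + (A + B + A *m B).
Proof. by rewrite mulmxDl !mulmxDr !mul1mx mulmx1 !addrA [1%:M + B + A]addrAC. Qed.

Lemma unitarymx_dilation m n (P : 'M[CC]_(m, n)) (W : 'M[CC]_m) :
  P \is unitarymx -> W \is unitarymx ->
  1%:M + P ^t* *m (W - 1%:M) *m P \is unitarymx.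
Proof.
move=> uP /unitarymxP uW; apply/unitarymxP; set D := W - 1%:M.
have W1D : 1%:M + D = W by rewrite addrC subrK.
have W1D' : 1%:M + D ^t* = W ^t* by rewrite -adjmx1 -adjmxD W1D.
have DD0 : D + D ^t* + D *m D ^t* = 0.
  by apply: (@addrI _ 1%:M); rewrite addr0 -mulmx_1D W1D W1D' uW.
have adjPDP : (P ^t* *m D *m P) ^t* = P ^t* *m D ^t* *m P.
  by rewrite !trmx_mul !map_mxM trmxCK mulmxA.
rewrite adjmxD adjmx1 adjPDP mulmx_1D.
have -> : P ^t* *m D *m P *m (P ^t* *m D ^t* *m P) = P ^t* *m (D *m D ^t*) *m P.
  by rewrite !mulmxA mulmxtVK.
by rewrite -!mulmxDl -!mulmxDr DD0 mulmx0 mul0mx addr0.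
Qed.

Lemma rowsub1_unitary k n (a : 'I_k -> 'I_n) :
  injective a -> rowsub a (1%:M : 'M[CC]_n) \is unitarymx.
Proof.
move=> inj_a; apply/unitarymxP/matrixP=> r s; rewrite !mxE.
rewrite (big_only1 (a r)) //= => [|j]; last first.
  by rewrite !mxE eq_sym => /negPf->; rewrite mul0r.
by rewrite !mxE eqxx conjC_nat mul1r eq_sym (inj_eq inj_a).
Qed.

Lemma perm_mx_unitary n (s : 'S_n) : (perm_mx s : 'M[CC]_n) \is unitarymx.
Proof. by rewrite perm_mxEsub rowsub1_unitary //; apply: perm_inj. Qed.

Section BlockCorrelation.
Variable n : nat.
Implicit Types (b bL bR : 'I_n -> nat) (g x y z : 'M[CC]_n).

Definition blockdiag b x := forall i j, b i != b j -> x i j = 0.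

Definition block_proj b (c : nat) : 'M[CC]_n := diag_mx (\row_i (b i == c)%:R).

Definition block_corr bL bR c g :=
  block_proj bL c *m g *m block_proj bR c *m g ^t*.

Definition corr_trace bL bR g :=
  \tr (block_corr bL bR 0%N g *m block_corr bL bR 1%N g).

Definition overlap b c g i k := \sum_(j | b j == c) g i j * (g k j)^*.

Lemma block_proj_comm b c x :
  blockdiag b x -> block_proj b c *m x = x *m block_proj b c.
Proof.
move=> bx; apply/matrixP=> i j; rewrite mul_diag_mx mul_mx_diag !mxE.
by have [->|/bx->] := eqVneq (b i) (b j); [exact: mulrC | rewrite mulr0 mul0r].
Qed.

Lemma block_proj_real b c : block_proj b c \is a mxOver Num.real.
Proof. by apply/mxOver_diag => //; apply/mxOverP=> i j; rewrite mxE realn. Qed.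

Lemma block_proj_perm b c (s : 'S_n) :
  perm_mx s *m block_proj b c *m (perm_mx s) ^t* = block_proj (b \o s) c.
Proof.
rewrite real_adjmx ?tr_perm_mx -?col_permE -?row_permE; last first.
  by apply/mxOverP=> i j; rewrite !mxE realn.
by apply/matrixP=> i j; rewrite !mxE (inj_eq perm_inj).
Qed.

Lemma block_corr_mul bL bR c x y z :
  blockdiag bL x -> z \is unitarymx -> blockdiag bR z ->
  block_corr bL bR c (x *m y *m z) = x *m block_corr bL bR c y *m x ^t*.
Proof.
move=> bx uz bz; rewrite /block_corr !trmx_mul !map_mxM !mulmxA.
rewrite (block_proj_comm c bx) -[_ *m z *m _]mulmxA -(block_proj_comm c bz).
by rewrite mulmxA mulmxtVK.
Qed.

Lemma block_corr_perm bL bR c g (s : 'S_n) :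
  block_corr bL bR c (g *m perm_mx s) = block_corr bL (bR \o s) c g.
Proof. by rewrite /block_corr -(block_proj_perm bR c s) trmx_mul map_mxM !mulmxA. Qed.

Lemma block_corrE bL bR c g i k :
  block_corr bL bR c g i k = (bL i == c)%:R * overlap bR c g i k.
Proof.
rewrite /block_corr mul_diag_mx mul_mx_diag mxE /overlap mulr_sumr [RHS]big_mkcond.
apply: eq_bigr => j _; rewrite !mxE.
by case: (bR j == c); rewrite ?mulr1 ?mulr0 ?mul0r ?mulrA.
Qed.

Lemma corr_trace_mul bL bR x y z :
  x \is unitarymx -> blockdiag bL x -> z \is unitarymx -> blockdiag bR z ->
  corr_trace bL bR (x *m y *m z) = corr_trace bL bR y.
Proof.
move=> ux bx uz bz; rewrite /corr_trace !(block_corr_mul _ _ bx uz bz).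
by rewrite (unitary_conjM _ _ ux) (mxtrace_unitary_conj _ ux).
Qed.

Lemma corr_trace_real bL bR y :
  y \is a mxOver Num.real -> corr_trace bL bR y \is Num.real.
Proof.
move=> realy; have realF c : block_corr bL bR c y \is a mxOver Num.real.
  by rewrite /block_corr !mxOverM ?block_proj_real ?real_adjmx_real.
by rewrite /mxtrace rpred_sum // => i _; apply: (mxOverP (mxOverM (realF 0) (realF 1))).
Qed.

Lemma corr_trace_perm bL bR g (s : 'S_n) :
  corr_trace bL bR (g *m perm_mx s) = corr_trace bL (bR \o s) g.
Proof. by rewrite /corr_trace !block_corr_perm. Qed.

Lemma corr_traceE bL bR g : corr_trace bL bR g =
  \sum_(i | bL i == 0%N) \sum_(k | bL k == 1%N)
    overlap bR 0%N g i k * overlap bR 1%N g k i.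
Proof.
rewrite /corr_trace /mxtrace [RHS]big_mkcond; apply: eq_bigr => i _.
(* The contextual patterns stop [rewrite] from testing the two [block_corr]
   factors for convertibility, which takes very long to fail. *)
rewrite mxE; under eq_bigr => k _ do
  rewrite [X in X * _]block_corrE [X in _ * X]block_corrE mulrACA.
case: (bL i == 0%N); last by rewrite big1 // => k _; rewrite !mul0r.
rewrite [RHS]big_mkcond; apply: eq_bigr => k _.
by case: (bL k == 1%N); rewrite !(mul1r, mul0r).
Qed.

Lemma overlap_single b c g i k j0 :
  (forall j, j != j0 -> g i j = 0) -> b j0 != c ->
  overlap b c g i k = 0 /\ overlap b c g k i = 0.
Proof.
move=> gi0 bj0; have gi j : b j == c -> g i j = 0.
  by move=> bj; apply: gi0; apply: contraNneq bj0 => <-.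
by split; apply: big1 => j /gi->; rewrite ?conjC0 ?mulr0 ?mul0r.
Qed.

Lemma overlap_prod_single b g i k j0 : (forall j, j != j0 -> g i j = 0) ->
  overlap b 0%N g i k * overlap b 1%N g k i = 0 /\
  overlap b 0%N g k i * overlap b 1%N g i k = 0.
Proof.
move=> gi0; have [bj0|bj0] := eqVneq (b j0) 0%N.
  have bj1 : b j0 != 1%N by rewrite bj0.
  by have [-> ->] := overlap_single k gi0 bj1; rewrite !mulr0.
by have [-> ->] := overlap_single k gi0 bj0; rewrite !mul0r.
Qed.

End BlockCorrelation.

Section Embedding.
Variables (n k : nat) (a : 'I_k -> 'I_n).
Implicit Type W : 'M[CC]_k.

(* [rowsub a 1%:M] selects the coordinates [a r]: for injective [a],
   [embed_mx W] acts as [W] on them and as the identity on the others. *)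
Definition embed_mx W : 'M[CC]_n :=
  1%:M + (rowsub a 1%:M) ^t* *m (W - 1%:M) *m rowsub a 1%:M.

Lemma embed_mx_unitary W :
  injective a -> W \is unitarymx -> embed_mx W \is unitarymx.
Proof. by move=> inj_a; apply: unitarymx_dilation; apply: rowsub1_unitary. Qed.

Lemma embed_mxE W i j : embed_mx W i j =
  (i == j)%:R + \sum_r \sum_s (a r == i)%:R * (W - 1%:M) r s * (a s == j)%:R.
Proof.
rewrite !mxE exchange_big; congr (_ + _); apply: eq_bigr => s _.
rewrite !mxE mulr_suml; apply: eq_bigr => r _.
by rewrite !mxE conjC_nat.
Qed.

Lemma embed_mx_id_row W i j : i \notin codom a -> embed_mx W i j = (i == j)%:R.
Proof.
move=> ni; rewrite embed_mxE big1 ?addr0 // => r _; rewrite big1 // => s _.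
suff /negPf-> : a r != i by rewrite !mul0r.
by apply: contraNneq ni => <-; apply: codom_f.
Qed.

Lemma embed_mx_id_col W i j : j \notin codom a -> embed_mx W i j = (i == j)%:R.
Proof.
move=> nj; rewrite embed_mxE big1 ?addr0 // => r _; rewrite big1 // => s _.
suff /negPf-> : a s != j by rewrite !mulr0.
by apply: contraNneq nj => <-; apply: codom_f.
Qed.

Lemma embed_mx_codom W r s : injective a -> embed_mx W (a r) (a s) = W r s.
Proof.
move=> inj_a; rewrite embed_mxE (inj_eq inj_a) (big_only1 r) // => [|r' /negPf nr' _].
  rewrite (big_only1 s) // => [|s' /negPf ns' _]; last by rewrite !(inj_eq inj_a) ns' mulr0.
  by rewrite !eqxx mul1r mulr1 !mxE subrKC.
by rewrite big1 // => s' _; rewrite !(inj_eq inj_a) nr' !mul0r.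
Qed.

End Embedding.

Lemma corr_trace_embed n (bL bR : 'I_n -> nat) (a : 'I_3 -> 'I_n) (W : 'M[CC]_3) :
  (forall r, bL (a r) = r) -> (forall r, bR (a r) = r) ->
  corr_trace bL bR (embed_mx a W) = W 0 0 * (W 1 0)^* * (W 1 1 * (W 0 1)^*).
Proof.
move=> aL aR; set E := embed_mx a W.
have inj_a : injective a by move=> r r' /(congr1 bL); rewrite !aL => /val_inj.
have out_codom (b : 'I_n -> nat) : (forall r, b (a r) = r) ->
    forall i (r : 'I_3), b i == r -> i != a r -> i \notin codom a.
  move=> ab i r /eqP bi; apply: contra => /codomP [r' ia]; apply/eqP.
  by rewrite ia; congr a; apply: ord_inj; rewrite -bi ia ab.
have E_row i : i \notin codom a -> forall j, j != i -> E i j = 0.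
  by move=> ni j /negPf ji; rewrite /E embed_mx_id_row // eq_sym ji.
have E_col j (r : 'I_3) : j \notin codom a -> j != a r -> E (a r) j = 0.
  by move=> nj /negPf jr; rewrite /E embed_mx_id_col // eq_sym jr.
rewrite corr_traceE (big_only1 (a 0)) ?aL // => [|i ni bi]; last first.
  rewrite big1 // => k _.
  exact: (overlap_prod_single bR k (E_row i (out_codom _ aL i 0 bi ni))).1.
rewrite (big_only1 (a 1)) ?aL // => [|k nk bk]; last first.
  exact: (overlap_prod_single bR (a 0) (E_row k (out_codom _ aL k 1 bk nk))).2.
rewrite /overlap (big_only1 (a 0)) ?aR // => [|j nj bj]; last first.
  by rewrite E_col ?mul0r // (out_codom _ aR j 0 bj nj).
rewrite (big_only1 (a 1)) ?aR // => [|j nj bj]; last first.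
  by rewrite E_col ?mul0r // (out_codom _ aR j 1 bj nj).
by rewrite /E !embed_mx_codom.
Qed.

Definition twist3 : 'M[CC]_3 := \matrix_(r, s)
  match val r, val s with
  | 0, 0 => Complex (2/3) (1/3)
  | 1, 1 | 2, 2 => Complex (1/3) (-1/3)
  | 1, 2 | 2, 1 => Complex (-2/3) (-1/3)
  | _, _ => Complex (1/3) (1/3)
  end.

Lemma twist3_unitary : twist3 \is unitarymx.
Proof.
apply/unitarymxP/matrixP=> r s; rewrite !mxE !big_ord_recr big_ord0 /= !mxE /=.
by case: r => [[|[|[|//]]] ?]; case: s => [[|[|[|//]]] ?] /=; simpc;
  apply/eqP; rewrite eq_complex /=; apply/andP; split; apply/eqP; field.
Qed.

Lemma twist3_cycle_nonreal :
  twist3 0 0 * (twist3 1 0)^* * (twist3 1 1 * (twist3 0 1)^*) \notin Num.real.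
Proof.
rewrite !mxE /=; simpc; rewrite realE !lecE /=.
by apply/negP; case/orP => /andP [/eqP H _]; lra.
Qed.

Lemma blockU_blockdiag n k1 k2 (x : 'M[CC]_n) :
  blockU k1 k2 x -> blockdiag (fun i : 'I_n => blk k1 k2 i) x.
Proof.
case/andP=> _ /forallP bx; move=> i j nij.
by have /forallP/(_ j)/implyP/(_ nij)/eqP := bx i.
Qed.

Lemma blk_first k1 k2 i : (i < k1)%N -> blk k1 k2 i = 0%N.
Proof. by rewrite /blk => ->. Qed.

Lemma blk_second k1 k2 i : (k1 <= i < k1 + k2)%N -> blk k1 k2 i = 1%N.
Proof. by move=> /andP[h1 h2]; rewrite /blk ltnNge h1 h2. Qed.

Lemma blk_third k1 k2 i : (k1 + k2 <= i)%N -> blk k1 k2 i = 2%N.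
Proof. by move=> h; rewrite /blk !ltnNge h (leq_trans (leq_addr k2 k1) h). Qed.

Lemma exists_unitary_nonreal_corr_trace n n1 n2 m1 m2 :
  (0 < n1)%N -> (0 < n2)%N -> (n1 + n2 < n)%N ->
  (0 < m1)%N -> (0 < m2)%N -> (m1 + m2 < n)%N ->
  exists2 g : 'M[CC]_n, g \is unitarymx &
    corr_trace (fun i => blk n1 n2 i) (fun i => blk m1 m2 i) g \notin Num.real.
Proof.
move=> n1_gt0 n2_gt0 n12_lt m1_gt0 m2_gt0 m12_lt.
have first_lt : (0 < n)%N by lia.
have n1_lt : (n1 < n)%N by lia.
have last_lt : (n.-1 < n)%N by lia.
have m1_lt : (m1 < n)%N by lia.
pose a (r : 'I_3) : 'I_n := tnth [tuple Ordinal first_lt; Ordinal n1_lt; Ordinal last_lt] r.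
pose s : 'S_n := tperm (Ordinal n1_lt) (Ordinal m1_lt).
have aL r : blk n1 n2 (a r) = r.
  case: r => [[|[|[|//]]] ?]; rewrite /a /tnth /=.
  - by rewrite blk_first.
  - by rewrite blk_second //; lia.
  - by rewrite blk_third //; lia.
have aR r : blk m1 m2 (s (a r)) = r.
  have neq (i j : 'I_n) : val i <> val j -> i != j by move=> nij; apply/eqP=> /(congr1 val).
  case: r => [[|[|[|//]]] ?]; rewrite /s /a /tnth /=.
  - by rewrite tpermD ?blk_first //; apply: neq => /=; lia.
  - by rewrite tpermL blk_second //=; lia.
  - by rewrite tpermD ?blk_third //=; [lia | apply: neq => /=; lia | apply: neq => /=; lia].
exists (embed_mx a twist3 *m perm_mx s).
  rewrite mul_unitarymx ?perm_mx_unitary ?embed_mx_unitary ?twist3_unitary //.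
  by move=> r r' /(congr1 (fun i : 'I_n => blk n1 n2 i)); rewrite !aL => /ord_inj.
by rewrite corr_trace_perm (corr_trace_embed twist3 aL aR) twist3_cycle_nonreal.
Qed.

Theorem proposition6p4 (n n1 n2 n3 m1 m2 m3 : nat)
  (hn1 : (0 < n1)%N) (hn2 : (0 < n2)%N) (hn3 : (0 < n3)%N)
  (hm1 : (0 < m1)%N) (hm2 : (0 < m2)%N) (hm3 : (0 < m3)%N)
  (hn : n = (n1 + n2 + n3)%N) (hm : n = (m1 + m2 + m3)%N) :
  (* L G' H is contained in G = U(n) ... *)
  (forall x y z : 'M[CC]_n,
      blockU n1 n2 x -> orthoR y -> blockU m1 m2 z ->
      unitaryC (x *m y *m z))
  /\
  (* ... and the inclusion is strict. *)
  (exists g : 'M[CC]_n,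
      unitaryC g /\
      ~ (exists x y z : 'M[CC]_n,
           [/\ blockU n1 n2 x, orthoR y, blockU m1 m2 z
             & g = x *m y *m z])).
Proof.
split=> [x y z /blockU_unitary ux /orthoR_unitary uy /blockU_unitary uz|].
  by rewrite unitaryCE !mul_unitarymx.
have [||||||g ug nonreal_g] := @exists_unitary_nonreal_corr_trace n n1 n2 m1 m2; try lia.
exists g; split=> [|[x [y [z [lx oy hz defg]]]]]; first by rewrite unitaryCE.
move: nonreal_g; rewrite defg (corr_trace_mul y (blockU_unitary lx) (blockU_blockdiag lx)
  (blockU_unitary hz) (blockU_blockdiag hz)).
by rewrite corr_trace_real ?orthoR_real.
Qed.
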